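(* Let $(M,\cdot,1)$ be a monoid, $\Sigma$ a finite alphabet, and $\ell:\Sigma^*\to M$ an $M$-language. If there exists a factorization $(g,f)$ on $L$ such that the set $\{S^{(g,f)}_\alpha(\ell)\mid\alpha\in\Sigma^*\}$ is finite, then $\ell$ is a recognizable $M$-language.
   Context: $L$ is the set of all functions $\Sigma^*\to M$ ($M$-languages); $\varepsilon$ is the empty word. For $m\in M$, $\ell\in L$, $m\cdot\ell$ is $\gamma\mapsto m\cdot\ell(\gamma)$. A factorization on $L$ is a pair $(g,f)$ of functions $g:L\to M$, $f:L\to L$ with $g(\ell)\cdot f(\ell)=\ell$ for all $\ell\in L$. For a word $\alpha$, $\Delta_\alpha:L\to L$ is $\Delta_\alpha(\ell)(\gamma)=\ell(\alpha\gamma)$. Define $S^{(g,f)}_\varepsilon$ as the identity on $L$ and $S^{(g,f)}_{\alpha\sigma}=f\circ\Delta_\sigma\circ S^{(g,f)}_\alpha$ for $\alpha\in\Sigma^*$, $\sigma\in\Sigma$. An $M$-DFA is a tuple $A=(Q,\Sigma,u,i_u,\delta,w,\rho)$ with $Q$ finite nonempty, $u\in Q$, $i_u\in M$, $\delta:Q\times\Sigma\to Q$, $w:Q\times\Sigma\to M$, $\rho:Q\to M$. Write $q\alpha$ for the extension of $\delta$ to words ($q\varepsilon=q$, $q(\alpha\sigma)=\delta(q\alpha,\sigma)$), and let $w^*(q,\varepsilon)=1$, $w^*(q,\alpha\sigma)=w^*(q,\alpha)\cdot w(q\alpha,\sigma)$. $A$ recognizes the $M$-language $\alpha\mapsto i_u\cdot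 w^*(u,\alpha)\cdot\rho(u\alpha)$. An $M$-language is recognizable if some $M$-DFA recognizes it. *)

From Stdlib Require List.
From mathcomp Require Import all_boot.
Unset Printing Implicit Defensive.

Definition is_monoid {M : Type} (op : M -> M -> M) (e : M) : Prop :=
  (forall a b c, op a (op b c) = op (op a b) c) /\
  (forall a, op e a = a) /\ (forall a, op a e = a).

(* Words over Sigma are seq Sigma; epsilon = [::]; alpha sigma = rcons alpha sigma. *)
Definition mlang (Sigma M : Type) := seq Sigma -> M.

Definition lscale {Sigma M : Type} (op : M -> M -> M) (m : M) (l : mlang Sigma M)
  : mlang Sigma M := fun g => op m (l g).

Definition is_factorization {Sigma M : Type} (op : M -> M -> M)
  (g : mlang Sigma M -> M) (f : mlang Sigma M -> mlang Sigma M) : Prop :=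
  forall l, lscale op (g l) (f l) = l.

Definition Delta {Sigma M : Type} (a : seq Sigma) (l : mlang Sigma M) : mlang Sigma M :=
  fun gm => l (a ++ gm).

(* S_eps = id, S_{alpha sigma} = f o Delta_sigma o S_alpha *)
Fixpoint S_rev {Sigma M : Type} (f : mlang Sigma M -> mlang Sigma M)
  (ra : seq Sigma) (l : mlang Sigma M) : mlang Sigma M :=
  match ra with
  | [::] => l
  | s :: ra' => f (Delta [:: s] (S_rev f ra' l))
  end.
(* input alpha read left to right; S_rev works on the reversed word *)
Definition S_fac {Sigma M : Type} (f : mlang Sigma M -> mlang Sigma M)
  (a : seq Sigma) : mlang Sigma M -> mlang Sigma M := S_rev f (rev a).

Record MDFA (Sigma : finType) (M : Type) := {
  Q : finType;
  u : Q;
  i_u : M;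
  delta : Q -> Sigma -> Q;
  wt : Q -> Sigma -> M;
  rho : Q -> M }.

Definition run {Sigma : finType} {M : Type} (A : MDFA Sigma M) (q : Q _ _ A)
  (a : seq Sigma) : Q _ _ A := foldl (delta _ _ A) q a.

(* w*(q,eps)=1, w*(q, alpha sigma) = w*(q,alpha) . w(q alpha, sigma) *)
Fixpoint wstar_rev {Sigma : finType} {M : Type} (op : M -> M -> M) (e : M)
  (A : MDFA Sigma M) (q : Q _ _ A) (ra : seq Sigma) : M :=
  match ra with
  | [::] => e
  | s :: ra' => op (wstar_rev op e A q ra') (wt _ _ A (run A q (rev ra')) s)
  end.
Definition wstar {Sigma : finType} {M : Type} (op : M -> M -> M) (e : M)
  (A : MDFA Sigma M) (q : Q _ _ A) (a : seq Sigma) : M := wstar_rev op e A q (rev a).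

Definition recognized_by {Sigma : finType} {M : Type} (op : M -> M -> M) (e : M)
  (A : MDFA Sigma M) : mlang Sigma M :=
  fun a => op (op (i_u _ _ A) (wstar op e A (u _ _ A) a)) (rho _ _ A (run A (u _ _ A) a)).

Definition recognizable {Sigma : finType} {M : Type} (op : M -> M -> M) (e : M)
  (l : mlang Sigma M) : Prop :=
  exists A : MDFA Sigma M, forall a, recognized_by op e A a = l a.

(** If only finitely many residuals [S_α ℓ] occur, index them by a finite
    type [Q]; the automaton whose state [q] stands for the residual [L q],
    with [δ(q, σ) = f (Δ_σ (L q))] and [w(q, σ) = g (Δ_σ (L q))], reaches the
    state of [S_α ℓ] after reading [α], with accumulated weight [w*] such that
    [ℓ(α γ) = w*(α) · S_α ℓ (γ)] for every [γ]; taking [γ = ε] gives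
    recognition of [ℓ]. *)

From Stdlib Require List.
From Stdlib Require Import ClassicalEpsilon Lia.
From mathcomp Require Import all_boot.

(* The extra index makes the index type inhabited even when [s] is empty. *)
Lemma exists_nth_index {X : Type} (s : list X) (d : X) :
  exists idx : X -> 'I_(List.length s).+1,
    forall x, List.In x s -> List.nth (idx x) s d = x.
Proof.
exists (fun x => epsilon (inhabits ord0)
                  (fun i : 'I_(List.length s).+1 => List.nth i s d = x)).
move=> x /(List.In_nth _ _ d) [n [n_lt nth_n]].
have n_ord : n < (List.length s).+1 by apply/ltP; lia.
exact: (epsilon_spec (inhabits ord0) (fun i : 'I__ => List.nth i s d = x)
          (ex_intro _ (Ordinal n_ord) nth_n)).
Qed.

Lemma S_fac_rcons {Sigma M : Type} (f : mlang Sigma M -> mlang Sigma M) a c l :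
  S_fac f (rcons a c) l = f (Delta [:: c] (S_fac f a l)).
Proof. by rewrite /S_fac rev_rcons. Qed.

Lemma is_factorizationE {Sigma M : Type} {op : M -> M -> M} {g f} :
  is_factorization op g f -> forall (l : mlang Sigma M) gm, op (g l) (f l gm) = l gm.
Proof. move=> gf_fact l gm; exact: (f_equal (fun h => h gm) (gf_fact l)). Qed.

Section MDFARuns.

Variables (Sigma : finType) (M : Type) (op : M -> M -> M) (e : M).
Variable A : MDFA Sigma M.

Lemma run_rcons q a c : run A q (rcons a c) = delta _ _ A (run A q a) c.
Proof. exact: foldl_rcons. Qed.

Lemma wstar_nil q : wstar op e A q [::] = e.
Proof. by []. Qed.

Lemma wstar_rcons q a c :
  wstar op e A q (rcons a c) = op (wstar op e A q a) (wt _ _ A (run A q a) c).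
Proof. by rewrite /wstar rev_rcons /= revK. Qed.

End MDFARuns.

Section ResidualAutomaton.

Variables (Sigma : finType) (M : Type) (op : M -> M -> M) (e : M).
Hypothesis opA : forall a b c, op a (op b c) = op (op a b) c.
Hypothesis op1m : forall a, op e a = a.

Variables (g : mlang Sigma M -> M) (f : mlang Sigma M -> mlang Sigma M).
Hypothesis gf_fact : is_factorization op g f.

Variables (l : mlang Sigma M) (Q : finType).
Variables (L : Q -> mlang Sigma M) (idx : mlang Sigma M -> Q).
Hypothesis L_idx : forall a, L (idx (S_fac f a l)) = S_fac f a l.

Definition residual_dfa : MDFA Sigma M :=
  Build_MDFA Sigma M Q (idx l) e
    (fun q c => idx (f (Delta [:: c] (L q))))
    (fun q c => g (Delta [:: c] (L q)))
    (fun q => L q [::]).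

Lemma run_residual_dfa a : run residual_dfa (idx l) a = idx (S_fac f a l).
Proof.
elim/last_ind: a => [|a c IHa] //.
by rewrite run_rcons IHa /= L_idx -S_fac_rcons.
Qed.

Lemma residual_dfa_weight a gm :
  op (wstar op e residual_dfa (idx l) a) (S_fac f a l gm) = l (a ++ gm).
Proof.
elim/last_ind: a gm => [|a c IHa] gm; first by rewrite wstar_nil op1m.
rewrite wstar_rcons run_residual_dfa /= L_idx S_fac_rcons -opA.
by rewrite (is_factorizationE gf_fact) IHa cat_rcons.
Qed.

Lemma residual_dfa_recognizes a : recognized_by op e residual_dfa a = l a.
Proof.
rewrite /recognized_by /= op1m run_residual_dfa L_idx residual_dfa_weight.
by rewrite cats0.
Qed.

End ResidualAutomaton.

Theorem lemma3 (M : Type) (op : M -> M -> M) (e : M) (Sigma : finType)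
  (l : mlang Sigma M) :
  is_monoid op e ->
  (exists (g : mlang Sigma M -> M) (f : mlang Sigma M -> mlang Sigma M),
     is_factorization op g f /\
     exists s : list (mlang Sigma M), forall a : seq Sigma, List.In (S_fac f a l) s) ->
  recognizable op e l.
Proof.
move=> [opA [op1m _]] [g [f [gf_fact [s residuals_in_s]]]].
have [idx nth_idx] := exists_nth_index s l.
pose L (q : 'I_(List.length s).+1) := List.nth q s l.
exists (residual_dfa _ _ e g f l _ L idx).
by apply: residual_dfa_recognizes => // a; apply/nth_idx/residuals_in_s.
Qed.
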